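(* Let $\rho:\mathfrak{gl}_{n|n}\to\mathfrak{gl}(V)$ be an irreducible representation of the complex Lie superalgebra $\mathfrak{gl}_{n|n}$ on a finite-dimensional $\mathbb{Z}_2$-graded complex vector space $V=V_0\oplus V_1$ with $\dim V_0\ne\dim V_1$ (extend $\rho$ to the universal enveloping algebra). Then $\rho(I_\ell)=0$ for every $\ell\in\mathbb{N}$.
   Context: A standard basis of $\mathrm{End}(\mathbb{C}^{n|n})$ consists of $E^{\sigma\tau}_{ij}$ with $\sigma,\tau\in\{0,1\}$ and $i,j\in\{1,\dots,n\}$, of parity $\sigma+\tau\bmod 2$, satisfying $E^{\sigma\tau}_{ij}E^{\sigma'\tau'}_{i'j'}=\delta^{\tau\sigma'}\delta_{ji'}E^{\sigma\tau'}_{ij'}$ (here $\sigma=1$ labels the odd block $\mathbb{C}^n$ and $\sigma=0$ the even one). The Lie superalgebra bracket is the supercommutator. The degree-$\ell$ Casimir element of the universal enveloping algebra is $I_\ell=\sum E^{\sigma_1\sigma_2}_{j_1j_2}(-1)^{\sigma_2}E^{\sigma_2\sigma_3}_{j_2j_3}(-1)^{\sigma_3}\cdots E^{\sigma_{\ell-1}\sigma_\ell}_{j_{\ell-1}j_\ell}(-1)^{\sigma_\ell}E^{\sigma_\ell\sigma_1}_{j_\ell j_1}$, summed over all $\sigma_1,\dots,\sigma_\ell\in\{0,1\}$ and $j_1,\dots,j_\ell\in\{1,\dots,n\}$. A representation maps even elements to even operators and odd elements to odd operators and preserves brackets. *)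

(* Ground field: the complex numbers, realised as R[i]
   (mathcomp-real-closed's complex over a realType R, i.e. over the reals). *)
From HB Require Import structures.
From mathcomp Require Import all_boot all_order all_algebra.
From mathcomp Require Import reals complex.
Set Implicit Arguments. Unset Strict Implicit. Unset Printing Implicit Defensive.
Import Order.TTheory GRing.Theory Num.Theory.
Local Open Scope ring_scope.

Section Super.
Variable F : pzRingType.

(* A Z_2-graded space F^{p|q} has coordinates 'I_(p + q); the first p
   coordinates span the even part, the last q the odd part. *)
Definition spar {p q : nat} (k : 'I_(p + q)) : bool := (p <= k)%N.

(* Homogeneous endomorphisms of F^{p|q} of parity a (false = even). *)
Definition mx_homog {p q : nat} (a : bool) (A : 'M[F]_(p + q)) : Prop :=
  forall i j : 'I_(p + q), spar i (+) spar j != a -> A i j = 0.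

Definition sbracket {N : nat} (a b : bool) (A B : 'M[F]_N) : 'M[F]_N :=
  A *m B - (-1) ^+ (a && b) *: (B *m A).

Definition even_proj {p q : nat} : 'M[F]_(p + q) :=
  \matrix_(i, j) ((i == j) && ~~ spar i)%:R.
End Super.

(* Index of the basis vector (sigma, i) of C^{n|n}; sigma = true is odd. *)
Definition bidx (n : nat) (s : bool) (i : 'I_n) : 'I_(n + n) :=
  if s then rshift n i else lshift n i.

Definition Ebasis {F : pzRingType} (n : nat) (s t : bool) (i j : 'I_n)
  : 'M[F]_(n + n) := delta_mx (bidx s i) (bidx t j).

Definition is_super_rep {F : pzRingType} (n d0 d1 : nat)
  (rho : {linear 'M[F]_(n + n) -> 'M[F]_(d0 + d1)}) : Prop :=
  (forall a X, mx_homog a X -> mx_homog a (rho X)) /\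
  (forall a b X Y, mx_homog a X -> mx_homog b Y ->
     rho (sbracket a b X Y) = sbracket a b (rho X) (rho Y)).

(* Graded invariant subspaces (row spaces of W; vectors are rows, an operator
   A acts as v |-> A v, i.e. on rows by right multiplication by A^T). *)
Definition graded_invariant {F : fieldType} (n d0 d1 : nat)
  (rho : {linear 'M[F]_(n + n) -> 'M[F]_(d0 + d1)}) (W : 'M[F]_(d0 + d1)) :=
  (W *m @even_proj F d0 d1 <= W)%MS /\
  (forall X : 'M[F]_(n + n), (W *m (rho X)^T <= W)%MS).

Definition irreducible_rep {F : fieldType} (n d0 d1 : nat)
  (rho : {linear 'M[F]_(n + n) -> 'M[F]_(d0 + d1)}) : Prop :=
  (0 < d0 + d1)%N /\
  forall W, graded_invariant rho W -> \rank W = 0%N \/ \rank W = (d0 + d1)%N.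

(* rho(I_l), where rho is extended to U(gl_{n|n}) as an algebra map:
   I_l = sum_{sigma, j} E^{s1 s2}_{j1 j2} (-1)^{s2} E^{s2 s3}_{j2 j3} ...
         (-1)^{s_l} E^{s_l s1}_{j_l j1}.
   With 0-based indices k < l, the k-th factor is E^{s_k s_{k+1 mod l}}
   and the total sign is (-1)^(s_1 + ... + s_{l-1}) (all but the first). *)
Definition rho_casimir {F : pzRingType} (n N : nat)
  (rho : 'M[F]_(n + n) -> 'M[F]_N) (l : nat) : 'M[F]_N :=
  \sum_(s : {ffun 'I_l -> bool}) \sum_(j : {ffun 'I_l -> 'I_n})
    ((-1) ^+ (\sum_(k < l | (0 < k)%N) (s k : nat)) *:
      \big[mulmx/1%:M]_(k < l)
        rho (Ebasis (s k) (s (ordS k)) (j k) (j (ordS k)))).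

(* Write E = (E_ab) for the matrix of generators of gl_{n|n}, so that
   I_{k+1} = sum_a (E^{k+1})_aa with the super matrix power.  The entries of
   E^{k+1} transform under the adjoint action exactly like the generators
   E_ab themselves; summing the diagonal makes the bracket telescope, so
   C := rho(I_{k+1}) commutes with rho, and it is even.  By Schur's lemma
   C = c * id.  The same transformation rule gives
   str rho((E^{k+1})_aa) = (-1)^(|a|+|b|) str rho((E^{k+1})_bb) for all a, b,
   and the supersigns of the n|n basis sum to 0, so str C = 0.  But
   str (c * id) = c (dim V_0 - dim V_1), hence c = 0. *)
From HB Require Import structures.
From mathcomp Require Import all_boot all_order all_algebra.
From mathcomp Require Import reals complex.
From mathcomp Require Import ring zify.
Import GRing.Theory Num.Theory.
Local Open Scope ring_scope.

Section FfunCons.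
Context {T : finType}.

Definition fcons {k} (x : T) (h : {ffun 'I_k -> T}) : {ffun 'I_k.+1 -> T} :=
  [ffun i => if unlift ord0 i is Some j then h j else x].

Lemma fcons0 k x (h : {ffun 'I_k -> T}) : fcons x h ord0 = x.
Proof. by rewrite ffunE unlift_none. Qed.

Lemma fconsS k x (h : {ffun 'I_k -> T}) i : fcons x h (lift ord0 i) = h i.
Proof. by rewrite ffunE liftK. Qed.

Lemma sum_ffunS (V : nmodType) k (G : {ffun 'I_k.+1 -> T} -> V) :
  \sum_g G g = \sum_x \sum_h G (fcons x h).
Proof.
rewrite pair_big /= (reindex (fun p : T * {ffun 'I_k -> T} => fcons p.1 p.2)) //.
apply: onW_bij; exists (fun g : {ffun 'I_k.+1 -> T} => (g ord0, [ffun j => g (lift ord0 j)])) => /=.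
  by case=> x h /=; rewrite fcons0; congr (_, _); apply/ffunP => j; rewrite ffunE fconsS.
move=> g; apply/ffunP => i; rewrite ffunE.
by case: unliftP => [j ->|->] //; rewrite ffunE.
Qed.

Definition fnext {m} (g : {ffun 'I_m -> T}) (c : T) (i : 'I_m) : T :=
  if insub i.+1 is Some j then g j else c.

Lemma fnext_lift m (g : {ffun 'I_m -> T}) x c (i : 'I_m) :
  fnext (fcons x g) c (lift ord0 i) = fnext g c i.
Proof.
rewrite /fnext; case: insubP => [j Hj vj|Hj]; case: insubP => [j' Hj' vj'|Hj'] //=.
- have -> : j = lift ord0 j' by apply: val_inj; rewrite /= vj vj'.
  by rewrite fconsS.
- by move: Hj Hj'; rewrite /= /bump /=; lia.
- by move: Hj Hj'; rewrite /= /bump /=; lia.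
Qed.

Lemma fnext_fcons0 m (g : {ffun 'I_m.+1 -> T}) x c : fnext (fcons x g) c ord0 = g ord0.
Proof.
rewrite /fnext; case: insubP => [j _ vj|]; last by rewrite /=; lia.
have -> : j = lift ord0 ord0 by apply: val_inj; rewrite /= vj.
by rewrite fconsS.
Qed.

Lemma fnext_last (g : {ffun 'I_1 -> T}) c : fnext g c ord0 = c.
Proof. by rewrite /fnext; case: insubP. Qed.

Lemma ordS_fnext m (g : {ffun 'I_m.+1 -> T}) (i : 'I_m.+1) :
  g (ordS i) = fnext g (g ord0) i.
Proof.
rewrite /fnext; case: insubP => [j Hj vj|Hj]; congr (g _); apply: val_inj => /=.
  by rewrite vj modn_small.
have -> : i = m :> nat by move: (ltn_ord i) Hj; rewrite /= !ltnS; lia.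
by rewrite modnn.
Qed.
End FfunCons.

Lemma sumr_deltaZl {F : pzSemiRingType} {V : lSemiModType F} {T : finType}
  (t0 : T) (G : T -> V) : \sum_x (x == t0)%:R *: G x = G t0.
Proof. by under eq_bigr do rewrite scaler_nat mulrb; rewrite -big_mkcond big_pred1_eq. Qed.

Lemma sumr_deltaZr {F : pzSemiRingType} {V : lSemiModType F} {T : finType}
  (t0 : T) (G : T -> V) : \sum_x (t0 == x)%:R *: G x = G t0.
Proof. by under eq_bigr do rewrite eq_sym; exact: sumr_deltaZl. Qed.

Section Homogeneous.
Context {F : comPzRingType} {p q : nat}.
Local Notation homog := (@mx_homog F p q).

Lemma mx_homogZ {b} c {A} : homog b A -> homog b (c *: A).
Proof. by move=> hA i j h; rewrite mxE hA // mulr0. Qed.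

Lemma mx_homog_sum {b} {J : finType} (G : J -> 'M[F]_(p + q)) :
  (forall x, homog b (G x)) -> homog b (\sum_x G x).
Proof. by move=> hG i j h; rewrite summxE big1 // => x _; exact: hG. Qed.

Lemma mx_homogM {b c A B} : homog b A -> homog c B -> homog (b (+) c) (A *m B).
Proof.
move=> hA hB i j h; rewrite mxE big1 // => k _.
have [ik|ik] := eqVneq (spar i (+) spar k) b; last by rewrite hA ?mul0r.
rewrite hB ?mulr0 //; apply: contra h => /eqP <-; rewrite -ik.
by case: (spar i); case: (spar k); case: (spar j).
Qed.

Lemma mx_homog_delta (a b : 'I_(p + q)) : homog (spar a (+) spar b) (delta_mx a b).
Proof.
move=> i j; rewrite mxE; have [->|] //= := eqVneq i a.
by have [->|] //= := eqVneq j b; rewrite eqxx.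
Qed.

Lemma mx_homog_tr {b A} : homog b A -> homog b A^T.
Proof. by move=> hA i j h; rewrite mxE hA // addbC. Qed.

Lemma even_projC {A} : homog false A -> A *m even_proj F = even_proj F *m A.
Proof.
move=> hA; apply/matrixP => i j; rewrite !mxE.
rewrite (bigD1 j) //= big1 => [|k /negbTE kj]; last by rewrite mxE kj mulr0.
rewrite (bigD1 i) //= [X in _ = _ + X]big1 => [|k /negbTE ki]; last first.
  by rewrite mxE eq_sym ki mul0r.
rewrite !mxE !eqxx !addr0 /=.
by case si: (spar i); case sj: (spar j); rewrite /= ?mulr0 ?mul0r ?mulr1 ?mul1r // hA ?si ?sj.
Qed.

Definition supertrace (A : 'M[F]_(p + q)) : F := \sum_i (-1) ^+ spar i * A i i.

Fact supertrace_is_nmod_morphism : nmod_morphism supertrace.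
Proof.
split=> [|A B]; first by apply: big1 => i _; rewrite mxE mulr0.
by rewrite -big_split; apply: eq_bigr => i _; rewrite mxE mulrDr.
Qed.
HB.instance Definition _ := GRing.isNmodMorphism.Build 'M[F]_(p + q) F supertrace
  supertrace_is_nmod_morphism.

Fact supertrace_is_scalable : scalable_for *%R supertrace.
Proof.
by move=> c A; rewrite /supertrace mulr_sumr; apply: eq_bigr => i _; rewrite mxE mulrCA.
Qed.
HB.instance Definition _ :=
  GRing.isScalable.Build F 'M[F]_(p + q) F *%R supertrace supertrace_is_scalable.

Lemma supertrace_mulC {b c A B} : homog b A -> homog c B ->
  supertrace (A *m B) = (-1) ^+ (b && c) * supertrace (B *m A).
Proof.
move=> hA hB; rewrite /supertrace mulr_sumr.
under eq_bigr do rewrite mxE mulr_sumr.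
under [RHS]eq_bigr do rewrite mxE !mulr_sumr.
rewrite [RHS]exchange_big; apply: eq_bigr => i _; apply: eq_bigr => j _.
have [hb|hb] := eqVneq (spar i (+) spar j) b; last by rewrite hA ?mul0r ?mulr0.
have [hc|hc] := eqVneq (spar j (+) spar i) c; last by rewrite hB ?mul0r ?mulr0.
by rewrite -hb -hc; case: (spar i); case: (spar j) => /=; ring.
Qed.

Lemma supertrace_sbracket {b c A B} : homog b A -> homog c B ->
  supertrace (sbracket b c A B) = 0.
Proof.
by move=> hA hB; rewrite /sbracket raddfB /= scalarZ (supertrace_mulC hA hB) subrr.
Qed.

Lemma supertrace_scalar (x : F) : supertrace x%:M = x * (p%:R - q%:R).
Proof.
rewrite /supertrace big_split_ord /= (eq_bigr (fun _ => x)) => [|i _]; last first.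
  by rewrite mxE eqxx /spar /= leqNgt ltn_ord expr0 mul1r mulr1n.
rewrite [X in _ + X](eq_bigr (fun _ => - x)) => [|i _]; last first.
  by rewrite mxE eqxx /spar /= leq_addr expr1 mulN1r mulr1n.
by rewrite sumrN !sumr_const !card_ord mulrBr !mulr_natr.
Qed.
End Homogeneous.


Section Sbracket.
Context {F : comPzRingType} {N : nat}.
Implicit Types A B C : 'M[F]_N.

Lemma sbracket_sumr p q A (J : finType) (G : J -> 'M[F]_N) :
  sbracket p q A (\sum_x G x) = \sum_x sbracket p q A (G x).
Proof. by rewrite /sbracket mulmx_sumr mulmx_suml scaler_sumr -sumrB. Qed.

Lemma sbracketZr p q A B c : sbracket p q A (c *: B) = c *: sbracket p q A B.
Proof. by rewrite /sbracket scalerBr -scalemxAr -scalemxAl !scalerA mulrC. Qed.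

Lemma sbracketMr p q1 q2 A B C :
  sbracket p (q1 (+) q2) A (B *m C) =
  sbracket p q1 A B *m C + (-1) ^+ (p && q1) *: (B *m sbracket p q2 A C).
Proof.
rewrite /sbracket mulmxBl mulmxBr -!scalemxAl -!scalemxAr !mulmxA scalerBr scalerA.
by rewrite -signr_addb -andb_addr addrA subrK.
Qed.
End Sbracket.

Section GradedBasis.
Context {n : nat}.

Definition bidx_pos (x : 'I_(n + n)) : 'I_n := match split x with inl i | inr i => i end.

Lemma spar_bidx s i : @spar n n (bidx s i) = s.
Proof. by case: s; rewrite /spar /= ?leq_addr // leqNgt ltn_ord. Qed.

Lemma bidx_posK s i : bidx_pos (bidx s i) = i.
Proof. by case: s; rewrite /bidx_pos /= -?/(unsplit (inl i)) -?/(unsplit (inr i)) unsplitK. Qed.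

Lemma bidxK x : bidx (spar x) (bidx_pos x) = x.
Proof.
rewrite -[x]splitK /bidx_pos unsplitK.
by case: (split x) => i; [rewrite (spar_bidx false i) | rewrite (spar_bidx true i)].
Qed.
End GradedBasis.
Section CasimirElements.
Context {F : comPzRingType} {n d0 d1 : nat}.
Context {rho : {linear 'M[F]_(n + n) -> 'M[F]_(d0 + d1)}}.
Hypothesis rho_super : is_super_rep rho.
Local Notation I := 'I_(n + n).
Local Notation par := (@spar n n).
Local Notation homog := (@mx_homog F d0 d1).

Definition Erho (a b : I) := rho (delta_mx a b).

Lemma Erho_homog a b : homog (par a (+) par b) (Erho a b).
Proof. exact: (proj1 rho_super _ _ (mx_homog_delta a b)). Qed.

Lemma Erho_bracket a b c d :
  sbracket (par a (+) par b) (par c (+) par d) (Erho a b) (Erho c d) =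
  (b == c)%:R *: Erho a d -
  (-1) ^+ ((par a (+) par b) && (par c (+) par d)) *: ((d == a)%:R *: Erho c b).
Proof.
rewrite /Erho -(proj2 rho_super _ _ _ _ (mx_homog_delta a b) (mx_homog_delta c d)).
rewrite /sbracket !mul_delta_mx_cond linearB linearZ /= !raddfMn /=.
by case: (b == c); case: (d == a); rewrite ?scale1r ?scale0r ?scaler0 ?raddf0.
Qed.

(* [Epow k a c] is the (a, c) entry of the (k+1)-th power of the matrix
   (E_ab) of generators, taken with the supersign of each summed index. *)
Fixpoint Epow (k : nat) (a c : I) : 'M[F]_(d0 + d1) :=
  if k is k'.+1 then \sum_b (-1) ^+ par b *: (Erho a b *m Epow k' b c) else Erho a c.

Lemma Epow_homog k a c : homog (par a (+) par c) (Epow k a c).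
Proof.
elim: k a c => [|k IH] a c /=; first exact: Erho_homog.
apply: mx_homog_sum => b; apply: mx_homogZ.
have := mx_homogM (Erho_homog a b) (IH b c).
by case: (par a); case: (par b); case: (par c).
Qed.

Lemma Epow_bracket k a b c d :
  sbracket (par a (+) par b) (par c (+) par d) (Erho a b) (Epow k c d) =
  (b == c)%:R *: Epow k a d -
  (-1) ^+ ((par a (+) par b) && (par c (+) par d)) *: ((d == a)%:R *: Epow k c b).
Proof.
elim: k a b c d => [|k IH] a b c d; first exact: Erho_bracket.
set p := par a (+) par b; pose sg x : F := (-1) ^+ par x * (-1) ^+ (p && (par c (+) par x)).
have split_term x :
  sbracket p (par c (+) par d) (Erho a b) ((-1) ^+ par x *: (Erho c x *m Epow k x d)) =
  (b == c)%:R *: ((-1) ^+ par x *: (Erho a x *m Epow k x d))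
  - (x == a)%:R *: (sg x *: (Erho c b *m Epow k x d))
  + (b == x)%:R *: (sg x *: (Erho c x *m Epow k a d))
  - (d == a)%:R *: (((-1) ^+ par x * (-1) ^+ (p && (par c (+) par d))) *:
                    (Erho c x *m Epow k x b)).
  have sign_mul : (-1) ^+ (p && (par c (+) par x)) * (-1) ^+ (p && (par x (+) par d))
                  = (-1) ^+ (p && (par c (+) par d)) :> F.
    rewrite -signr_addb -andb_addr; congr ((-1) ^+ (_ && _)).
    by case: (par c); case: (par x); case: (par d).
  rewrite sbracketZr.
  have par_split : par c (+) par d = (par c (+) par x) (+) (par x (+) par d).
    by case: (par c); case: (par x); case: (par d).
  rewrite {1}par_split sbracketMr Erho_bracket IH -/p mulmxBl mulmxBr -!scalemxAl -!scalemxAr.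
  rewrite !scalerDr !scalerN !scalerA !addrA -sign_mul /sg.
  by congr (_ - _ + _ - _); congr (_ *: _); ring.
rewrite /= sbracket_sumr (eq_bigr _ (fun x _ => split_term x)).
rewrite sumrB big_split sumrB /= -scaler_sumr.
rewrite (sumr_deltaZl a (fun x => sg x *: (Erho c b *m Epow k x d))).
rewrite (sumr_deltaZr b (fun x => sg x *: (Erho c x *m Epow k a d))) -scaler_sumr.
have -> : sg a = sg b by rewrite /sg /p; case: (par a); case: (par b); case: (par c) => /=; ring.
rewrite subrK scalerA mulrC -scalerA; congr (_ - _ *: _).
by rewrite scaler_sumr; apply: eq_bigr => x _; rewrite scalerA mulrC.
Qed.

Definition casimir k := \sum_a Epow k a a.

Lemma casimir_even k : homog false (casimir k).
Proof. by apply: mx_homog_sum => a; rewrite -(addbb (par a)); exact: Epow_homog. Qed.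

(* The sum over [c] of the bracket relation with [c = d] telescopes to zero. *)
Lemma casimir_Erho_comm k a b : Erho a b *m casimir k = casimir k *m Erho a b.
Proof.
apply/eqP; rewrite -subr_eq0; apply/eqP.
have : \sum_c sbracket (par a (+) par b) (par c (+) par c) (Erho a b) (Epow k c c) = 0.
  rewrite (eq_bigr _ (fun c _ => Epow_bracket k a b c c)) sumrB.
  rewrite (sumr_deltaZr b (fun c => Epow k a c)).
  under eq_bigr do rewrite addbb andbF expr0 scale1r.
  by rewrite (sumr_deltaZl a (fun c => Epow k c b)) subrr.
under eq_bigr do rewrite addbb.
by rewrite -sbracket_sumr /sbracket andbF expr0 scale1r mulmx_sumr mulmx_suml.
Qed.

Lemma rho_sum_Erho X : rho X = \sum_i \sum_j X i j *: Erho i j.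
Proof.
rewrite {1}(matrix_sum_delta X) linear_sum; apply: eq_bigr => i _.
by rewrite linear_sum; apply: eq_bigr => j _; rewrite linearZ.
Qed.

Lemma casimir_comm k X : rho X *m casimir k = casimir k *m rho X.
Proof.
rewrite rho_sum_Erho mulmx_suml mulmx_sumr; apply: eq_bigr => i _.
rewrite mulmx_suml mulmx_sumr; apply: eq_bigr => j _.
by rewrite -scalemxAl -scalemxAr casimir_Erho_comm.
Qed.

Lemma supertrace_Epow k a b :
  supertrace (Epow k a a) = (-1) ^+ (par a (+) par b) * supertrace (Epow k b b).
Proof.
have := supertrace_sbracket (Erho_homog a b) (Epow_homog k b a).
rewrite Epow_bracket !eqxx !mulr1n !scale1r raddfB /= scalarZ.
by rewrite (addbC (par b)) andbb => /eqP; rewrite subr_eq0 => /eqP.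
Qed.

(* The supersigns of the basis of C^{n|n} sum to n - n = 0. *)
Lemma supertrace_casimir k : supertrace (casimir k) = 0.
Proof.
rewrite raddf_sum /=.
have [b0 _|I0] := pickP (@predT I); last by rewrite big_pred0.
under eq_bigr do rewrite (supertrace_Epow k _ b0) signr_addb -mulrA.
rewrite -mulr_suml.
have -> : \sum_(a : I) (-1) ^+ par a = 0 :> F.
  transitivity (supertrace (1%:M : 'M[F]_(n + n))); last first.
    by rewrite supertrace_scalar subrr mulr0.
  by apply: eq_bigr => i _; rewrite mxE eqxx mulr1.
by rewrite mul0r.
Qed.

Definition Eword {k} (a : I) (h : {ffun 'I_k -> I}) (c : I) : 'M[F]_(d0 + d1) :=
  (-1) ^+ (\sum_(i < k) par (h i)) *:
  \big[mulmx/1%:M]_(i < k.+1) Erho (fcons a h i) (fnext (fcons a h) c i).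

Lemma Eword_fcons k a b (h : {ffun 'I_k -> I}) c :
  Eword a (fcons b h) c = (-1) ^+ par b *: (Erho a b *m Eword b h c).
Proof.
rewrite /Eword [X in (-1) ^+ X]big_ord_recl [X in _ *: X]big_ord_recl.
rewrite fcons0 fnext_fcons0 !fcons0 exprD -scalemxAr scalerA.
under eq_bigr do rewrite fconsS.
by congr (_ *: (_ *m _)); apply: eq_bigr => i _; rewrite fconsS fnext_lift.
Qed.

Lemma Epow_words k a c : Epow k a c = \sum_(h : {ffun 'I_k -> I}) Eword a h c.
Proof.
elim: k a c => [|k IH] a c /=.
  rewrite (eq_bigr (fun _ => Erho a c)) => [|h _]; last first.
    by rewrite /Eword big_ord0 expr0 scale1r big_ord_recl big_ord0 mulmx1 fcons0 fnext_last.
  by rewrite sumr_const card_ffun !card_ord expn0.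
rewrite sum_ffunS; apply: eq_bigr => b _.
by rewrite IH mulmx_sumr scaler_sumr; apply: eq_bigr => h _; rewrite Eword_fcons.
Qed.

Lemma rho_casimir_cycles k : rho_casimir rho k.+1 =
  \sum_(g : {ffun 'I_k.+1 -> I}) (-1) ^+ (\sum_(i < k.+1 | (0 < i)%N) par (g i)) *:
    \big[mulmx/1%:M]_(i < k.+1) Erho (g i) (g (ordS i)).
Proof.
rewrite /rho_casimir pair_big /=; symmetry.
rewrite (reindex (fun sj : {ffun 'I_k.+1 -> bool} * {ffun 'I_k.+1 -> 'I_n} =>
   [ffun i => bidx (sj.1 i) (sj.2 i)])) /=; last first.
  apply: onW_bij.
  exists (fun g : {ffun 'I_k.+1 -> I} => ([ffun i => par (g i)], [ffun i => bidx_pos (g i)])).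
    by case=> s j /=; congr (_, _); apply/ffunP => i; rewrite !ffunE ?spar_bidx ?bidx_posK.
  by move=> g; apply/ffunP => i; rewrite !ffunE bidxK.
apply: eq_bigr => [[s j]] _ /=; congr (_ ^+ _ *: _).
  by apply: eq_bigr => i _; rewrite ffunE spar_bidx.
by apply: eq_bigr => i _; rewrite /Erho !ffunE.
Qed.

Lemma rho_casimirE k : rho_casimir rho k.+1 = casimir k.
Proof.
rewrite rho_casimir_cycles sum_ffunS; apply: eq_bigr => a _.
rewrite Epow_words; apply: eq_bigr => h _.
rewrite /Eword big_mkcond [X in (-1) ^+ X]big_ord_recl /= add0n.
congr (_ ^+ _ *: _); first by apply: eq_bigr => i _; rewrite fconsS.
by apply: eq_bigr => i _; rewrite ordS_fnext fcons0.
Qed.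
End CasimirElements.

Lemma graded_schur {C : numClosedFieldType} {n d0 d1 : nat}
    {rho : {linear 'M[C]_(n + n) -> 'M[C]_(d0 + d1)}} {A : 'M[C]_(d0 + d1)} :
  irreducible_rep rho -> mx_homog false A -> (forall X, rho X *m A = A *m rho X) ->
  exists c, A = c%:M.
Proof.
move=> [dim_gt0 irr] A_even A_comm.
have [c /eigenvalueP [v v_eigen v_nz]] := eigenvalue_closed A^T dim_gt0.
exists c; set D := A^T - c%:M.
have D_even_proj : D *m even_proj C = even_proj C *m D.
  by rewrite mulmxBl mulmxBr (even_projC (mx_homog_tr A_even)) scalar_mxC.
have D_comm X : (rho X)^T *m D = D *m (rho X)^T.
  by rewrite mulmxBr mulmxBl -!trmx_mul A_comm scalar_mxC.
have ker_invariant : graded_invariant rho (kermx D).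
  split; last by move=> X; apply/sub_kermxP; rewrite -mulmxA D_comm mulmxA mulmx_ker mul0mx.
  by apply/sub_kermxP; rewrite -mulmxA -D_even_proj mulmxA mulmx_ker mul0mx.
have v_ker : (v <= kermx D)%MS.
  by apply/sub_kermxP; rewrite mulmxBr v_eigen mul_mx_scalar subrr.
have [/eqP|ker_full] := irr _ ker_invariant.
  by rewrite mxrank_eq0 => /eqP ker0; move: v_ker; rewrite ker0 submx0 (negbTE v_nz).
have /eqP : \rank D = 0%N by move: ker_full; rewrite mxrank_ker; have := rank_leq_row D; lia.
by rewrite mxrank_eq0 subr_eq0 => /eqP AtE; rewrite -[A]trmxK AtE tr_scalar_mx.
Qed.

Local Open Scope complex_scope.

Theorem mainTheorem7 (R : realType) (n d0 d1 : nat)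
  (rho : {linear 'M[R[i]]_(n + n) -> 'M[R[i]]_(d0 + d1)}) :
  is_super_rep rho -> irreducible_rep rho -> d0 <> d1 ->
  forall l : nat, (0 < l)%N -> rho_casimir rho l = 0.
Proof.
move=> rho_super rho_irr d0_neq_d1 [//|k] _.
rewrite rho_casimirE.
have [c casimirE] := graded_schur rho_irr (casimir_even rho_super k) (casimir_comm rho_super k).
have := supertrace_casimir rho_super k.
rewrite casimirE supertrace_scalar => /eqP; rewrite mulf_eq0 subr_eq0 eqr_nat.
by case/orP => /eqP // ->; rewrite raddf0.
Qed.
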